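(* Let $H = \{h_0 = 0_H, h_1, \dots, h_{t-1}\}$ be a finite abelian group with a fixed enumeration of its elements, and let $\boldsymbol{\lambda} = (\lambda_0,\dots,\lambda_{t-1})$ be a sequence of nonnegative integers with $k = \lambda_0 + \cdots + \lambda_{t-1}$. Suppose that for infinitely many primes $p$, every non-zero sum subset of type $\boldsymbol{\lambda}$ of $(\mathbb{Z}_p \times H) \setminus \{0_{\mathbb{Z}_p\times H}\}$ is sequenceable. Then for every positive integer $m$ all of whose prime factors are greater than $k!/2$, every non-zero sum subset of type $\boldsymbol{\lambda}$ of $(\mathbb{Z}_m \times H) \setminus \{0_{\mathbb{Z}_m\times H}\}$ is sequenceable.
   Context: For a finite subset $S$ of an abelian group with $|S| = k$, an ordering $(x_1,\dots,x_k)$ of $S$ has partial sums $(y_0,\dots,y_k)$ with $y_0 = 0$, $y_i = x_1+\cdots+x_i$. It is a sequencing if the $y_i$ are pairwise distinct, and a rotational sequencing if they are pairwise distinct except that $y_k = y_0 = 0$; $S$ is sequenceable if it has one or the other. $S$ is non-zero sum if the sum of its elements is nonzero. The type of a finite subset $S \subseteq G \times H$ is $(\lambda_0,\dots,\lambda_{t-1})$ where $\lambda_i$ is the number of elements of $S$ whose $H$-coordinate equals $h_i$. *)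

From HB Require Import structures.
From mathcomp Require Import all_boot all_order all_algebra.
Set Implicit Arguments. Unset Strict Implicit. Unset Printing Implicit Defensive.
Import GRing.Theory.
Local Open Scope ring_scope.

HB.instance Definition _ (A H : finZmodType) := Finite.on (A * H)%type.

Definition psums (G : zmodType) (s : seq G) : seq G :=
  [seq \sum_(x <- take i s) x | i <- iota 0 (size s).+1].

Definition ordering_of (G : finZmodType) (S : {set G}) (s : seq G) : Prop :=
  uniq s /\ s =i S.

Definition is_sequencing (G : zmodType) (s : seq G) : Prop :=
  uniq (psums s).

(* rotational sequencing: y_0..y_{k-1} pairwise distinct and y_k = y_0 = 0 *)
Definition is_rot_sequencing (G : zmodType) (s : seq G) : Prop :=
  uniq (belast 0 (behead (psums s))) /\ \sum_(x <- s) x = 0.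

Definition sequenceable (G : finZmodType) (S : {set G}) : Prop :=
  exists s : seq G, ordering_of S s /\ (is_sequencing s \/ is_rot_sequencing s).

Definition nonzero_sum (G : finZmodType) (S : {set G}) : Prop :=
  \sum_(x in S) x != 0.

(* type of S ⊆ A × H: lam h = number of elements of S with H-coordinate h
   (the enumeration h_0 = 0, ..., h_{t-1} of H is encoded by indexing
   lam directly by the elements of H). *)
Definition has_type (A H : finZmodType) (S : {set A * H}) (lam : H -> nat) : Prop :=
  forall h : H, #|[set x in S | x.2 == h]| = lam h.

Definition all_seq_of_type (A H : finZmodType) (lam : H -> nat) : Prop :=
  forall S : {set A * H}, (0 : A * H) \notin S -> nonzero_sum S ->
    has_type S lam -> sequenceable S.

From HB Require Import structures.
From mathcomp Require Import all_boot all_order all_algebra.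
From mathcomp Require Import fingroup perm alt.
From mathcomp Require Import ring lra zify.

(* Write S = {(a_i, h_i)} in Z_m x H.  A block of an ordering of S sums to 0 iff its
   index set T has sum_T a_i = 0 (mod m) and sum_T h_i = 0.  Let M be the 0/1 matrix
   whose rows are the indicators of the T with sum_T a_i = 0 (mod m).  An integer form
   f with f.a <> 0 (mod m) is not in the rational row space of M: by Cramer's rule on
   an invertible r x r minor P of M, det P * f is an integer combination of rows of M,
   and det P is prime to m because a nonzero 0/1 determinant of order r <= k has no
   prime factor above k!/2.  Hence some integer x with M x = 0 keeps the inequalities
   of a that matter: distinct, nonzero entries and nonzero total sum stay so.  Reducing
   x modulo a large prime p gives S' = {(x_i mod p, h_i)} in Z_p x H of the same type,
   nonzero-sum and avoiding 0, whose zero-sum blocks include those of S; a sequencing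
   of S' (not rotational, the sum being nonzero) then pulls back to S. *)

Set Implicit Arguments. Unset Strict Implicit. Unset Printing Implicit Defensive.
Import Order.TTheory GRing.Theory Num.Theory.
Local Open Scope ring_scope.

Lemma card_perm_parity r (b : bool) :
  (1 < r)%N -> (#|[set s : 'S_r | odd_perm s == b]| * 2)%N = r`!.
Proof.
move=> r_gt1.
have even : (#|[set s : 'S_r | odd_perm s == false]| * 2)%N = r`!.
  have := @card_Alt 'I_r; rewrite card_ord mulnC => /(_ r_gt1) <-.
  by congr (_ * 2)%N; apply: eq_card => s; rewrite inE Alt_even eqbF_neg.
have total : (#|[set s : 'S_r | odd_perm s == false]|
              + #|[set s : 'S_r | odd_perm s == true]|)%N = r`!.
  rewrite -card_Sn -(cardsC [set s : 'S_r | odd_perm s == false]).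
  by congr (_ + _)%N; apply: eq_card => s; rewrite !inE; case: odd_perm.
by case: b; lia.
Qed.

Section ZeroOneDeterminant.

Variables (r : nat) (P : 'M[int]_r).
Hypothesis P01 : forall i j, P i j = 0 \/ P i j = 1.

Let prod01 (s : 'S_r) : 0 <= \prod_i P i (s i) <= 1.
Proof.
apply/andP; split; first by apply: prodr_ge0 => i _; case: (P01 i (s i)) => ->.
by apply: prodr_ile1 => i _; case: (P01 i (s i)) => ->.
Qed.

Lemma det01_norm_le_fact : `|\det P| <= r`!%:R.
Proof.
rewrite -card_Sn -sumr_const; apply: le_trans (ler_norm_sum _ _ _) _.
apply: ler_sum => s _; rewrite normrM normrX normrN normr1 expr1n mul1r.
by have /andP[ge0 le1] := prod01 s; rewrite ger0_norm.
Qed.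

Let parity_sum_bound (b : bool) :
  0 <= \sum_(s : 'S_r | odd_perm s == b) \prod_i P i (s i)
    <= #|[set s : 'S_r | odd_perm s == b]|%:R.
Proof.
apply/andP; split; first by apply: sumr_ge0 => s _; case/andP: (prod01 s).
apply: le_trans (ler_sum _ (fun s _ => proj2 (andP (prod01 s)))) _.
by rewrite sumr_const cardsE.
Qed.

(* The even and odd permutations each contribute a sum in [0, r!/2]. *)
Lemma det01_norm_le_half_fact : (1 < r)%N -> `|\det P| * 2 <= r`!%:R.
Proof.
move=> r_gt1.
have det_split : \det P = \sum_(s : 'S_r | odd_perm s == false) \prod_i P i (s i)
                        - \sum_(s : 'S_r | odd_perm s == true) \prod_i P i (s i).
  rewrite /determinant (bigID (fun s : 'S_r => odd_perm s == false)) /= -sumrN.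
  congr (_ + _); apply: eq_big => s; rewrite ?eqbF_neg ?eqb_id ?negbK //.
    by move/negbTE ->; rewrite expr0 mul1r.
  by move=> ->; rewrite expr1 mulN1r.
have := parity_sum_bound false; have := parity_sum_bound true.
rewrite det_split -(card_perm_parity false r_gt1) natrM.
have -> : #|[set s : 'S_r | odd_perm s == true]| = #|[set s : 'S_r | odd_perm s == false]|.
  by have := card_perm_parity true r_gt1; have := card_perm_parity false r_gt1; lia.
set c := (#|_|%:R : int) => /andP[O0 Oc] /andP[E0 Ec].
rewrite ler_pM2r // ler_norml; apply/andP; split; lra.
Qed.

End ZeroOneDeterminant.

Lemma coprime_det01 (m k r : nat) (P : 'M[int]_r) :
  (forall i j, P i j = 0 \/ P i j = 1) -> (r <= k)%N -> (0 < m)%N ->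
  (forall q, prime q -> (q %| m)%N -> (k`! < 2 * q)%N) ->
  \det P != 0 -> coprime m `|\det P|.
Proof.
move=> P01 r_le_k m_gt0 m_primes det_neq0.
rewrite coprime_has_primes ?absz_gt0 //; apply/hasPn => q.
rewrite !mem_primes => /and3P[q_prime _ q_dvd_det]; apply/negP => /and3P[_ _ q_dvd_m].
have q_le_det : (q <= `|\det P|)%N by apply: dvdn_leq; rewrite ?absz_gt0.
have := m_primes q q_prime q_dvd_m; have := leq_fact r_le_k; have := prime_gt1 q_prime.
have [r_gt1|r_le1] := ltnP 1 r.
  have := det01_norm_le_half_fact P01 r_gt1.
  rewrite -abszE -PoszM natz lez_nat; lia.
have := det01_norm_le_fact P01; rewrite -abszE natz lez_nat.
have : (r`! <= 1)%N := leq_fact r_le1.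
lia.
Qed.

Lemma not_submx_ker_witness (F : fieldType) s k (M : 'M[F]_(s, k)) (f : 'rV[F]_k) :
  ~~ (f <= M)%MS -> exists2 x : 'cV_k, M *m x = 0 & (f *m x) 0 0 != 0.
Proof.
rewrite submxE => fC_neq0.
have [j fCj_neq0] : exists j, (f *m cokermx M) 0 j != 0.
  apply/existsP; apply: contraNT fC_neq0; rewrite negb_exists => /forallP fC0.
  by apply/eqP/rowP => j; rewrite [RHS]mxE; apply/eqP; move: (fC0 j); rewrite negbK.
exists (col j (cokermx M)); first by rewrite colE mulmxA mulmx_coker mul0mx.
by rewrite colE mulmxA -colE mxE.
Qed.

(* Adding a large multiple of [y] to [x0] cannot cancel any of the finitely many forms. *)
Lemma ker_avoid_forms (R : realFieldType) s k (M : 'M[R]_(s, k)) (fs : seq 'rV[R]_k) :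
  (forall f, f \in fs -> exists2 x : 'cV_k, M *m x = 0 & (f *m x) 0 0 != 0) ->
  exists2 x : 'cV_k, M *m x = 0 & forall f, f \in fs -> (f *m x) 0 0 != 0.
Proof.
elim: fs => [|f fs IHfs] fs_sep; first by exists 0; rewrite ?mulmx0.
have [x0 Mx0 x0_sep] : exists2 x0 : 'cV_k, M *m x0 = 0 & forall g, g \in fs -> (g *m x0) 0 0 != 0.
  by apply: IHfs => g g_fs; apply: fs_sep; rewrite inE g_fs orbT.
have [y My fy_neq0] := fs_sep f (mem_head _ _).
pose ratio (g : 'rV_k) : R := `|(g *m x0) 0 0 / (g *m y) 0 0|.
pose c := 1 + \sum_(g <- f :: fs) ratio g.
have ratio_lt_c g : g \in f :: fs -> ratio g < c.
  move=> g_in; rewrite /c (big_rem g g_in) /=.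
  have : 0 <= \sum_(h <- rem g (f :: fs)) ratio h by apply: sumr_ge0 => *; apply: normr_ge0.
  lra.
exists (x0 + c *: y); first by rewrite mulmxDr Mx0 -scalemxAr My scaler0 addr0.
move=> g g_in.
have -> : (g *m (x0 + c *: y)) 0 0 = (g *m x0) 0 0 + c * (g *m y) 0 0.
  by rewrite mulmxDr -scalemxAr mxE [X in _ + X]mxE.
have [gy0|gy_neq0] := eqVneq ((g *m y) 0 0) 0.
  rewrite gy0 mulr0 addr0; apply: x0_sep; move: g_in; rewrite inE => /orP[/eqP g_f|//].
  by move: fy_neq0; rewrite -g_f gy0 eqxx.
apply: contraTneq (ratio_lt_c g g_in) => /eqP; rewrite addr_eq0 => /eqP cE.
have c_gt0 : 0 < c := le_lt_trans (normr_ge0 _) (ratio_lt_c g g_in).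
by rewrite /ratio cE mulNr mulfK // normrN gtr0_norm // ltxx.
Qed.

Local Notation ratM := (map_mx (intr : int -> rat)).

Lemma ratME m n (A : 'M[int]_(m, n)) i j : ratM A i j = (A i j)%:~R.
Proof. exact: mxE. Qed.

Lemma ratM_inj m n : injective (ratM : 'M_(m, n) -> 'M_(m, n)).
Proof.
by move=> A B /matrixP AB; apply/matrixP => i j; have := AB i j; rewrite !ratME => /intr_inj.
Qed.

(* Cramer's rule on a maximal invertible minor of [M]. *)
Lemma submx_intr_det s k (M : 'M[int]_(s, k)) (f : 'rV[int]_k) :
  (ratM f <= ratM M)%MS ->
  exists r (rho : 'I_r -> 'I_s) (gam : 'I_r -> 'I_k) (w : 'rV[int]_r),
    [/\ (r <= k)%N, \det (colsub gam (rowsub rho M)) != 0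
      & \det (colsub gam (rowsub rho M)) *: f = w *m rowsub rho M].
Proof.
move=> f_sub; set MQ := ratM M.
pose rho := maxrankfun MQ.
have MQ_full : row_full (rowsub rho MQ)^T.
  by rewrite /row_full mxrank_tr; apply: maxrowsub_free.
pose gam := fullrankfun MQ_full.
set A := rowsub rho M; set P := colsub gam A.
have AQ : ratM A = rowsub rho MQ by rewrite map_mxsub.
have PQ : ratM P = colsub gam (rowsub rho MQ) by rewrite map_mxsub AQ.
have PQ_unit : ratM P \in unitmx by rewrite PQ -unitmx_tr trmx_mxsub fullrowsub_unit.
have detP_unit : (\det P)%:~R \is a @GRing.unit rat by rewrite -det_map_mx -unitmxE.
exists (\rank MQ), rho, gam, (colsub gam f *m \adj P); split.
- exact: rank_leq_col.
- by move: detP_unit; rewrite unitfE intr_eq0.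
have : (ratM f <= rowsub rho MQ)%MS by rewrite eq_maxrowsub.
case/submxP => u fE; apply: ratM_inj.
have uE : u = colsub gam (ratM f) *m invmx (ratM P).
  by rewrite fE -mulmx_colsub -PQ mulmxK.
rewrite map_mxZ !map_mxM map_mxsub map_mx_adj {1}fE uE AQ /invmx PQ_unit det_map_mx.
by rewrite -!mulmxA -scalemxAl -scalemxAr scalerA mulrV ?scale1r.
Qed.

Lemma dvdz_form_of_submx s k (m : nat) (M : 'M[int]_(s, k)) (a : 'cV[int]_k)
    (f : 'rV[int]_k) :
  (0 < m)%N -> (forall i j, M i j = 0 \/ M i j = 1) ->
  (forall q, prime q -> (q %| m)%N -> (k`! < 2 * q)%N) ->
  (forall i, (m%:Z %| (M *m a) i ord0)%Z) ->
  (ratM f <= ratM M)%MS -> (m%:Z %| (f *m a) ord0 ord0)%Z.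
Proof.
move=> m_gt0 M01 m_primes Ma_dvd /submx_intr_det[r [rho [gam [w [r_le_k det_neq0 fE]]]]].
set P := colsub gam (rowsub rho M) in det_neq0 fE.
have m_det_coprime : coprime m `|\det P|.
  by apply: (coprime_det01 _ r_le_k m_gt0 m_primes det_neq0) => i j; rewrite !mxE.
suff : (m%:Z %| \det P * (f *m a) ord0 ord0)%Z by rewrite !dvdzE abszM /= Gauss_dvdr.
have -> : \det P * (f *m a) 0 0 = (w *m (rowsub rho M *m a)) 0 0.
  by rewrite mulmxA -fE -scalemxAl [RHS]mxE.
rewrite mxE; apply: rpred_sum => i _; apply: dvdz_mull.
by rewrite mul_rowsub_mx mxE.
Qed.

Lemma clear_denominators k (x : 'cV[rat]_k) :
  exists2 d : int, d != 0 & exists z : 'cV[int]_k, ratM z = d%:~R *: x.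
Proof.
exists (\prod_i denq (x i 0)).
  by rewrite prodf_seq_neq0; apply/allP => i _; rewrite denq_neq0.
exists (\col_i (numq (x i 0) * \prod_(j | j != i) denq (x j 0))).
apply/matrixP => i j; rewrite ord1 ratME !mxE [\prod_j _](bigD1 i) //= !intrM numqE.
ring.
Qed.

Lemma int_ker_avoid_forms s k (m : nat) (M : 'M[int]_(s, k)) (a : 'cV[int]_k)
    (fs : seq 'rV[int]_k) :
  (0 < m)%N -> (forall i j, M i j = 0 \/ M i j = 1) ->
  (forall q, prime q -> (q %| m)%N -> (k`! < 2 * q)%N) ->
  (forall i, (m%:Z %| (M *m a) i ord0)%Z) ->
  (forall f, f \in fs -> ~~ (m%:Z %| (f *m a) ord0 ord0)%Z) ->
  exists2 x : 'cV[int]_k, M *m x = 0 & forall f, f \in fs -> (f *m x) 0 0 != 0.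
Proof.
move=> m_gt0 M01 m_primes Ma_dvd fs_ndvd.
have [xQ MxQ xQ_sep] : exists2 xQ : 'cV[rat]_k,
    ratM M *m xQ = 0 & forall fQ, fQ \in map ratM fs -> (fQ *m xQ) 0 0 != 0.
  apply: ker_avoid_forms => _ /mapP[f f_fs ->]; apply: not_submx_ker_witness.
  by apply: contra (fs_ndvd f f_fs); apply: dvdz_form_of_submx.
have [d d_neq0 [z zE]] := clear_denominators xQ.
exists z => [|f f_fs].
  by apply: ratM_inj; rewrite map_mxM zE -scalemxAr MxQ scaler0 map_mx0.
have := xQ_sep _ (map_f ratM f_fs); apply: contra => /eqP fz0.
have : ratM (f *m z) 0 0 = 0 by rewrite mxE fz0.
by rewrite map_mxM zE -scalemxAr mxE => /eqP; rewrite mulf_eq0 intr_eq0 (negPf d_neq0).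
Qed.

Lemma val_ord_sum n (I : Type) (r : seq I) (P : pred I) (u : I -> 'I_n.+1) :
  val (\sum_(i <- r | P i) u i) = ((\sum_(i <- r | P i) val (u i)) %% n.+1)%N.
Proof.
elim: r => [|i r IHr]; first by rewrite !big_nil mod0n.
by rewrite !big_cons; case: (P i) => //=; rewrite IHr modnDmr.
Qed.

Lemma ord_sum_eq0 n (I : Type) (r : seq I) (P : pred I) (u : I -> 'I_n.+1) :
  (\sum_(i <- r | P i) u i == 0) = (n.+1%:Z %| \sum_(i <- r | P i) (u i : nat)%:Z)%Z.
Proof.
by rewrite -(big_morph Posz PoszD (erefl 0%Z)) dvdzE absz_nat -(inj_eq val_inj) val_ord_sum.
Qed.

Lemma ord_dvdz_sub n (u v : 'I_n.+1) : (n.+1%:Z %| (u : nat)%:Z - (v : nat)%:Z)%Z = (u == v).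
Proof.
by rewrite -eqz_mod_dvd !modz_nat !modn_small ?ltn_ord // eqz_nat.
Qed.

Local Notation intcol a := (\col_i ((a i : nat)%:Z)).

(* One 0/1 row per subset [T] of indices: its indicator if [T] is zero-sum under [a], else 0. *)
Lemma zero_sum_system K n (a : 'I_K -> 'I_n.+1) :
  exists s (M : 'M[int]_(s, K)),
    [/\ forall t i, M t i = 0 \/ M t i = 1,
        forall t, (n.+1%:Z %| (M *m intcol a) t ord0)%Z &
        forall v : 'cV_K, M *m v = 0 ->
          forall T : {set 'I_K}, \sum_(i in T) a i = 0 -> \sum_(i in T) v i 0 = 0].
Proof.
pose row (T : {set 'I_K}) i : int := if (\sum_(l in T) a l == 0) && (i \in T) then 1 else 0.
pose M : 'M[int]_(#|{set 'I_K}|, K) := \matrix_(t, i) row (enum_val t) i.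
have M_row (v : 'cV_K) T :
    (M *m v) (enum_rank T) 0 = if \sum_(l in T) a l == 0 then \sum_(l in T) v l 0 else 0.
  rewrite mxE; under eq_bigr do rewrite mxE enum_rankK.
  have [aT0|aT_neq0] := eqVneq (\sum_(l in T) a l) 0; rewrite /row.
    rewrite [RHS]big_mkcond; apply: eq_bigr => i _.
    by rewrite aT0 eqxx; case: (i \in T); rewrite ?mul1r ?mul0r.
  by rewrite big1 // => i _; rewrite (negPf aT_neq0) mul0r.
exists #|{set 'I_K}|, M; split.
- by move=> t i; rewrite mxE /row; case: (_ && _); [right | left].
- move=> t; rewrite -[t]enum_valK M_row; case: eqP => [|_]; last exact: dvdz0.
  by move/eqP; rewrite ord_sum_eq0 => aT_dvd; under eq_bigr do rewrite mxE.
- by move=> v Mv T /eqP aT0; have := M_row v T; rewrite aT0 Mv mxE.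
Qed.

Lemma zero_sum_int_lift K n (a : 'I_K -> 'I_n.+1) :
  (forall q, prime q -> (q %| n.+1)%N -> (K`! < 2 * q)%N) ->
  exists x : 'I_K -> int,
    [/\ forall T : {set 'I_K}, \sum_(i in T) a i = 0 -> \sum_(i in T) x i = 0,
        forall i j, x i = x j -> a i = a j,
        forall i, x i = 0 -> a i = 0 &
        \sum_i x i = 0 -> \sum_i a i = 0].
Proof.
move=> n_primes.
have [s [M [M01 Ma_dvd M_zero_sums]]] := zero_sum_system a.
pose forms : seq 'rV[int]_K :=
  [seq delta_mx 0 i - delta_mx 0 j | i <- enum 'I_K, j <- enum 'I_K] ++
  [seq delta_mx 0 i | i <- enum 'I_K] ++ [:: const_mx 1].
pose fs := [seq f <- forms | ~~ (n.+1%:Z %| (f *m intcol a) ord0 ord0)%Z].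
have fs_ndvd f : f \in fs -> ~~ (n.+1%:Z %| (f *m intcol a) ord0 ord0)%Z.
  by rewrite mem_filter => /andP[].
have [x Mx x_sep] := int_ker_avoid_forms (ltn0Sn n) M01 n_primes Ma_dvd fs_ndvd.
have form_dvd f : f \in forms -> (f *m x) 0 0 = 0 -> (n.+1%:Z %| (f *m intcol a) ord0 ord0)%Z.
  move=> f_in fx0; apply/negPn/negP => f_ndvd.
  by have := x_sep f; rewrite /fs mem_filter f_ndvd f_in fx0 eqxx => /(_ isT).
have diffE (v : 'cV[int]_K) i j :
    ((delta_mx 0 i - delta_mx 0 j : 'rV_K) *m v) 0 0 = v i 0 - v j 0.
  by rewrite mulmxBl -!rowE !mxE.
have unitE (v : 'cV[int]_K) i : ((delta_mx 0 i : 'rV_K) *m v) 0 0 = v i 0 by rewrite -rowE mxE.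
have onesE (v : 'cV[int]_K) : ((const_mx 1 : 'rV_K) *m v) 0 0 = \sum_i v i 0.
  by rewrite mxE; apply: eq_bigr => i _; rewrite mxE mul1r.
exists (fun i => x i 0); split.
- exact: M_zero_sums.
- move=> i j xij; apply/eqP; rewrite -ord_dvdz_sub.
  have diff_in : delta_mx 0 i - delta_mx 0 j \in forms.
    by rewrite mem_cat; apply/orP; left; apply: allpairs_f; rewrite mem_enum.
  by have := form_dvd _ diff_in; rewrite !diffE !mxE xij subrr; apply.
- move=> i xi0; apply/eqP; rewrite -(ord_dvdz_sub _ 0) subr0.
  have unit_in : delta_mx 0 i \in forms by rewrite !mem_cat map_f ?orbT ?mem_enum.
  by have := form_dvd _ unit_in; rewrite !unitE !mxE xi0; apply.
- move=> x0; apply/eqP; rewrite ord_sum_eq0.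
  have ones_in : const_mx 1 \in forms by rewrite !mem_cat mem_seq1 eqxx !orbT.
  have := form_dvd _ ones_in; rewrite !onesE => /(_ x0).
  by under eq_bigr do rewrite mxE.
Qed.

Lemma Zp_nat_small_eq0 p n : (1 < p)%N -> (n < p)%N -> (n%:R : 'Z_p) = 0 -> n = 0.
Proof. by move=> p_gt1 n_lt /(congr1 (@nat_of_ord _)); rewrite val_Zp_nat // modn_small. Qed.

Lemma Zp_intr_small_eq0 p (z : int) : (1 < p)%N -> (`|z| < p)%N -> (z%:~R : 'Z_p) = 0 -> z = 0.
Proof.
move=> p_gt1; case: z => n /= n_lt.
  by move=> /(Zp_nat_small_eq0 p_gt1 n_lt) ->.
by rewrite NegzE mulrNz => /eqP; rewrite oppr_eq0 => /eqP /(Zp_nat_small_eq0 p_gt1 n_lt).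
Qed.

Lemma intr_Zp_faithful (I : finType) (x : I -> int) :
  exists N, forall p, (1 < p)%N -> (N < p)%N ->
    [/\ forall i j, (x i)%:~R = (x j)%:~R :> 'Z_p -> x i = x j,
        forall i, (x i)%:~R = 0 :> 'Z_p -> x i = 0 &
        \sum_i (x i)%:~R = 0 :> 'Z_p -> \sum_i x i = 0].
Proof.
pose N := (\sum_i \sum_j absz (x i - x j)%R + \sum_i absz (x i) + absz (\sum_i x i)%R)%N.
exists N => p p_gt1 N_lt.
have small_eq0 z : (`|z| <= N)%N -> (z%:~R : 'Z_p) = 0 -> z = 0.
  by move=> z_le; apply: Zp_intr_small_eq0 => //; apply: leq_ltn_trans N_lt.
have le_sum (J : finType) (F : J -> nat) j : (F j <= \sum_j F j)%N.
  by rewrite (bigD1 j) //= leq_addr.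
split.
- move=> i j xij; apply/eqP; rewrite -subr_eq0.
  apply/eqP/small_eq0; last by rewrite intrB xij subrr.
  have := le_sum _ (fun j => absz (x i - x j)%R) j.
  have := le_sum _ (fun i => \sum_j absz (x i - x j)%R)%N i.
  rewrite /N; lia.
- by move=> i; apply: small_eq0; have := le_sum _ (fun i => absz (x i)) i; rewrite /N; lia.
- by rewrite -rmorph_sum; apply: small_eq0; rewrite /N leq_addl.
Qed.

Lemma uniq_map_transfer (I A B : eqType) (F : I -> A) (F' : I -> B) (r : seq I) :
  {in r &, forall i j, F i = F j -> F' i = F' j} -> uniq (map F' r) -> uniq (map F r).
Proof.
elim: r => [|i r IHr] //= FF' /andP[F'i_notin F'r_uniq]; apply/andP; split.
  apply: contra F'i_notin => /mapP[j j_in Fij]; apply/mapP; exists j => //.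
  by apply: FF'; rewrite ?inE ?eqxx ?j_in ?orbT.
by apply: IHr => // j l j_in l_in; apply: FF'; rewrite inE ?j_in ?l_in orbT.
Qed.

(* Equal partial sums y_u = y_v with u <= v mean that the block between them sums to 0. *)
Lemma uniq_psums_map (I : finType) (G G' : zmodType) (e : I -> G) (g : I -> G') (t : seq I) :
  uniq t -> (forall T : {set I}, \sum_(i in T) e i = 0 -> \sum_(i in T) g i = 0) ->
  uniq (psums (map g t)) -> uniq (psums (map e t)).
Proof.
move=> t_uniq zero_sums; rewrite /psums !size_map; apply: uniq_map_transfer => u v _ _.
wlog u_le_v : u v / (u <= v)%N => [wlog_uv|].
  have [le|/ltnW le] := leqP u v; first exact: wlog_uv.
  by move/esym/(wlog_uv _ _ le)/esym.
have psum_split (G0 : zmodType) (f : I -> G0) w : (u <= w)%N ->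
    \sum_(z <- take w (map f t)) z
    = \sum_(z <- take u (map f t)) z + \sum_(l in [set l in drop u (take w t)]) f l.
  move=> u_le_w; rewrite -{1}(cat_take_drop u (take w (map f t))) big_cat take_takel //.
  congr (_ + _); rewrite -map_take -map_drop big_map big_uniq ?drop_uniq ?take_uniq //.
  by apply: eq_bigl => l; rewrite inE.
rewrite (psum_split _ e _ u_le_v) (psum_split _ g _ u_le_v) => psums_eq.
have block0 : \sum_(l in [set l in drop u (take v t)]) e l = 0.
  by apply: (@addrI _ (\sum_(z <- take u (map e t)) z)); rewrite addr0 -psums_eq.
by rewrite (zero_sums _ block0) addr0.
Qed.

Lemma sequencing_of_nonzero_sum (G : finZmodType) (S : {set G}) :
  nonzero_sum S -> sequenceable S -> exists s, ordering_of S s /\ is_sequencing s.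
Proof.
move=> S_nz [s [[s_uniq sS] [s_seq|[_ s_sum0]]]]; first by exists s.
move: S_nz; rewrite /nonzero_sum (eq_bigl (mem s)) => [|x]; last by rewrite /= sS.
by rewrite -big_uniq //= s_sum0 eqxx.
Qed.

Lemma map_pmap_pick (I : finType) (T : eqType) (g : I -> T) (s : seq T) :
  (forall y, y \in s -> exists i, g i = y) ->
  map g (pmap (fun y => [pick i | g i == y]) s) = s.
Proof.
elim: s => //= y s IHs s_img; have [i gi] := s_img y (mem_head _ _).
case: pickP => [j /eqP gj|/(_ i)]; last by rewrite gi eqxx.
by rewrite /= gj IHs // => z z_s; apply: s_img; rewrite inE z_s orbT.
Qed.

Lemma sequencing_pullback (I : finType) (G G' : finZmodType) (e : I -> G) (g : I -> G') :
  injective e -> injective g ->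
  (forall T : {set I}, \sum_(i in T) e i = 0 -> \sum_(i in T) g i = 0) ->
  (exists s', ordering_of [set g i | i : I] s' /\ is_sequencing s') ->
  sequenceable [set e i | i : I].
Proof.
move=> e_inj g_inj zero_sums [s' [[s'_uniq s'_img] s'_seq]].
pose t := pmap (fun y => [pick i | g i == y]) s'.
have s'E : map g t = s'.
  by apply: map_pmap_pick => y; rewrite s'_img => /imsetP[i _ ->]; exists i.
have t_uniq : uniq t by rewrite -(map_inj_uniq g_inj) s'E.
have t_all i : i \in t by rewrite -(mem_map g_inj) s'E s'_img imset_f.
exists (map e t); split; first split.
- by rewrite map_inj_uniq.
- move=> x; apply/mapP/imsetP => [[i _ ->]|[i _ ->]]; exists i => //.
- by left; apply: (uniq_psums_map t_uniq zero_sums); rewrite s'E.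
Qed.

Lemma sum_pair (U V : zmodType) (I : Type) (r : seq I) (P : pred I) (F : I -> U * V) :
  \sum_(i <- r | P i) F i = (\sum_(i <- r | P i) (F i).1, \sum_(i <- r | P i) (F i).2).
Proof. by rewrite [LHS]surjective_pairing !raddf_sum. Qed.

Lemma card_of_type (A H : finZmodType) (S : {set A * H}) (lam : H -> nat) :
  has_type S lam -> #|S| = (\sum_h lam h)%N.
Proof.
move=> S_type; rewrite -(eq_bigr _ (fun h _ => S_type h)) -sum1_card.
rewrite (partition_big (fun x => x.2) predT) //=.
by apply: eq_bigr => h _; rewrite -sum1_card; apply: eq_bigl => x; rewrite inE.
Qed.

Lemma card_imset_type (I : finType) (A H : finZmodType) (f : I -> A * H) h :
  injective f -> #|[set x in [set f i | i : I] | x.2 == h]| = #|[set i | (f i).2 == h]|.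
Proof.
move=> f_inj; rewrite -(card_imset _ f_inj); apply: eq_card => x; rewrite !inE.
apply/andP/imsetP => [[/imsetP[i _ ->] fi2]|[i fi2 ->]]; first by exists i; rewrite ?inE.
by rewrite imset_f ?inE; move: fi2; rewrite inE.
Qed.

Lemma imset_enum_val (T : finType) (A : {set T}) : [set enum_val i | i : 'I_#|A|] = A.
Proof.
apply/setP => x; apply/imsetP/idP => [[i _ ->]|xA]; first exact: enum_valP.
by exists (enum_rank_in xA x); rewrite ?enum_rankK_in.
Qed.

Section ReplaceFirstCoordinate.

Variables (I : finType) (A A' H : finZmodType) (e : I -> A * H) (y : I -> A').
Hypothesis e_inj : injective e.

Local Notation g := (fun i => (y i, (e i).2)).

Lemma pair_inj : (forall i j, y i = y j -> (e i).1 = (e j).1) -> injective g.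
Proof.
move=> y_eq i j [/y_eq e1 e2]; apply: e_inj.
by move: e1 e2; case: (e i) => ? ?; case: (e j) => ? ? /= -> ->.
Qed.

Lemma pair_notin0 : (forall i, y i = 0 -> (e i).1 = 0) ->
  (0 : A * H) \notin [set e i | i : I] -> (0 : A' * H) \notin [set g i | i : I].
Proof.
move=> y_eq0; apply: contra => /imsetP[i _ [/esym/y_eq0 e1 /esym e2]].
by apply/imsetP; exists i => //; move: e1 e2; case: (e i) => ? ? /= -> ->.
Qed.

Lemma pair_nonzero_sum : (\sum_i y i = 0 -> \sum_i (e i).1 = 0) -> injective g ->
  nonzero_sum [set e i | i : I] -> nonzero_sum [set g i | i : I].
Proof.
move=> y_sum0 g_inj; rewrite /nonzero_sum !big_imset => [|i j _ _ /g_inj|i j _ _ /e_inj] //=.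
by rewrite !sum_pair /=; apply: contra => /eqP[/y_sum0 -> ->].
Qed.

Lemma pair_zero_sums :
    (forall T : {set I}, \sum_(i in T) (e i).1 = 0 -> \sum_(i in T) y i = 0) ->
  forall T : {set I}, \sum_(i in T) e i = 0 -> \sum_(i in T) g i = 0.
Proof. by move=> y_zero_sums T; rewrite !sum_pair => -[/y_zero_sums -> ->]. Qed.

Lemma pair_type (lam : H -> nat) : injective g ->
  has_type [set e i | i : I] lam -> has_type [set g i | i : I] lam.
Proof. by move=> g_inj e_type h; rewrite card_imset_type // -(e_type h) card_imset_type. Qed.

End ReplaceFirstCoordinate.

Theorem theorem4p12 (H : finZmodType) (lam : H -> nat) :
  let k := (\sum_(h : H) lam h)%N in
  (forall N : nat, exists p : nat,
      (N < p)%N /\ prime p /\ all_seq_of_type 'Z_p lam) ->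
  forall n : nat,
    (forall q : nat, prime q -> (q %| n.+1)%N -> (k`! < 2 * q)%N) ->
    all_seq_of_type 'I_n.+1 lam.
Proof.
move=> k large_primes n n_primes S S_notin0 S_nz S_type.
have S_primes : forall q, prime q -> (q %| n.+1)%N -> (#|S|`! < 2 * q)%N.
  by rewrite (card_of_type S_type).
rewrite -(imset_enum_val S) in S_notin0 S_nz S_type *.
set e : 'I_#|S| -> 'I_n.+1 * H := enum_val in S_notin0 S_nz S_type *.
have e_inj : injective e := @enum_val_inj _ _.
have [x [x_zero_sums x_eq x_eq0 x_sum0]] := zero_sum_int_lift (fun i => (e i).1) S_primes.
have [N x_modp] := intr_Zp_faithful x.
have [p [N_lt [p_prime p_seq]]] := large_primes N.
have [xp_eq xp_eq0 xp_sum0] := x_modp p (prime_gt1 p_prime) N_lt.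
pose y i : 'Z_p := (x i)%:~R.
have y_eq i j : y i = y j -> (e i).1 = (e j).1 by move/xp_eq/x_eq.
have y_eq0 i : y i = 0 -> (e i).1 = 0 by move/xp_eq0/x_eq0.
have y_sum0 : \sum_i y i = 0 -> \sum_i (e i).1 = 0 by move/xp_sum0/x_sum0.
have g_inj := pair_inj e_inj y_eq.
have g_nz := pair_nonzero_sum e_inj y_sum0 g_inj S_nz.
apply: (sequencing_pullback e_inj g_inj).
  apply: pair_zero_sums => T /x_zero_sums x_T0.
  by rewrite /y -rmorph_sum x_T0 rmorph0.
apply: (sequencing_of_nonzero_sum g_nz).
by apply: (p_seq _ _ g_nz); [apply: pair_notin0 | apply: pair_type].
Qed.
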